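(* Let $\phi$ be a Young function satisfying the $\Delta_2$-condition, $w$ a weight function, and let $l_{(\phi,w)}$ be the Orlicz-Lorentz sequence space, i.e. the Orlicz-Lorentz space $L_{(\phi,w)}$ over $(\mathbb{N},2^{\mathbb{N}},\nu)$ with $\nu$ the counting measure. Let $\Psi:\mathbb{N}\to\mathbb{N}$ induce the composition operator $C_\Psi f=f\circ\Psi$ on $l_{(\phi,w)}$. Then $\mathcal{A}(C_\Psi)=\infty$ if and only if there exists a sequence $(n_m)_{m\ge1}$ of distinct natural numbers such that $n_m\notin\Psi^m(\mathbb{N})$ but $n_m\in\Psi^{m-1}(\mathbb{N})$ for each $m\ge1$.
   Context: A Young function is a convex $\phi:[0,\infty)\to[0,\infty)$ with $\phi(x)=0\iff x=0$ and $\lim_{x\to\infty}\phi(x)=\infty$; $\Delta_2$-condition: $\phi(2x)\le k\phi(x)$ for some $k>0$ and all $x>0$. A weight function is a non-increasing locally integrable $w:(0,\infty)\to(0,\infty)$ with $\int_0^\infty w=\infty$. For $f:\mathbb{N}\to\mathbb{C}$, $\nu_f(s)=\#\{n:|f(n)|>s\}$, $f^*(t)=\inf\{s>0:\nu_f(s)\le t\}$; $l_{(\phi,w)}$ is the space of $f$ with $\int_0^\infty\phi(\alpha f^*(t))w(t)\,dt<\infty$ for some $\alpha>0$, with the Luxemburg norm. $\Psi^0=\mathrm{id}$. The ascent $\mathcal{A}(T)$ is the smallest integer $m$ with $\mathcal{N}(T^m)=\mathcal{N}(T^{m+1})$ ($\mathcal{N}$ = kernel), and $\infty$ if no such $m$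 exists. *)

From HB Require Import structures.
From mathcomp Require Import all_boot all_order all_algebra.
From mathcomp Require Import all_classical all_reals all_analysis.
From mathcomp Require Import complex.
Set Implicit Arguments. Unset Strict Implicit. Unset Printing Implicit Defensive.
Import Order.TTheory GRing.Theory Num.Theory.
Local Open Scope classical_set_scope.
Local Open Scope ring_scope.

Section Defs.
Variable R : realType.

(* Young function phi : [0,oo) -> [0,oo), given as a function R -> R
   whose values off [0,oo) are irrelevant. *)
Definition young_function (phi : R -> R) : Prop :=
  (forall x y t, 0 <= x -> 0 <= y -> 0 <= t <= 1 ->
     phi (t * x + (1 - t) * y) <= t * phi x + (1 - t) * phi y) /\
  (forall x, 0 <= x -> 0 <= phi x) /\
  (forall x, 0 <= x -> (phi x = 0 <-> x = 0)) /\
  (phi x @[x --> +oo] --> +oo).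

Definition delta2 (phi : R -> R) : Prop :=
  exists k : R, 0 < k /\ forall x, 0 < x -> phi (2 * x) <= k * phi x.

Definition weight_function (w : R -> R) : Prop :=
  (forall t, 0 < t -> 0 < w t) /\
  (forall s t, 0 < s -> s <= t -> w t <= w s) /\
  (forall a, 0 < a -> (@lebesgue_measure R).-integrable [set t : R | 0 < t <= a] (EFin \o w)) /\
  (\int[@lebesgue_measure R]_(t in [set t : R | (0 < t)%R]) (w t)%:E = +oo)%E.

Definition cabs (z : R[i]) : R := Normc.normc z.

(* nu_f(s) <= t, where nu_f(s) = #{n : |f n| > s} (possibly infinite) *)
Definition distr_le (f : nat -> R[i]) (s t : R) : Prop :=
  forall l : seq nat, uniq l -> all (fun n => s < cabs (f n)) l ->
    (size l)%:R <= t.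

(* decreasing rearrangement f^*(t) = inf {s > 0 : nu_f(s) <= t}, in \bar R
   (inf of the empty set is +oo) *)
Definition rearr (f : nat -> R[i]) (t : R) : \bar R :=
  ereal_inf [set s%:E | s in [set s : R | 0 < s /\ distr_le f s t]].

(* integrand  phi (alpha f^*(t)) w(t), with phi(+oo) = +oo *)
Definition ol_integrand (phi w : R -> R) (alpha : R) (f : nat -> R[i]) (t : R)
  : \bar R :=
  match rearr f t with
  | r%:E => (phi (alpha * r) * w t)%:E
  | _ => +oo%E
  end.

Definition in_l_phi_w (phi w : R -> R) (f : nat -> R[i]) : Prop :=
  exists alpha : R, 0 < alpha /\
    (\int[@lebesgue_measure R]_(t in [set t : R | (0 < t)%R]) ol_integrand phi w alpha f t
       < +oo)%E.

Definition comp_op (Psi : nat -> nat) (f : nat -> R[i]) : nat -> R[i] :=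
  f \o Psi.

Definition ker_pow (V : set (nat -> R[i])) (T : (nat -> R[i]) -> nat -> R[i])
  (m : nat) : set (nat -> R[i]) :=
  [set f | V f /\ iter m T f = (fun _ => 0)].

Definition ascent_infinite (V : set (nat -> R[i]))
  (T : (nat -> R[i]) -> nat -> R[i]) : Prop :=
  ~ (exists m : nat, ker_pow V T m = ker_pow V T m.+1).

End Defs.

From HB Require Import structures.
From mathcomp Require Import all_boot all_order all_algebra.
From mathcomp Require Import all_classical all_reals all_analysis.
From mathcomp Require Import complex.
Import Order.TTheory GRing.Theory Num.Theory.
Local Open Scope classical_set_scope.
Local Open Scope ring_scope.

(* On a space V, the kernel of C_Psi^m consists of the f in V vanishing on
   Psi^m(N).  These ranges shrink, so the kernels grow, and the kernel grows
   strictly at step m exactly when some point of Psi^m(N) lies outside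
   Psi^(m+1)(N) -- provided V contains the indicator of every singleton, which
   l_(phi,w) does because the decreasing rearrangement of such an indicator is
   the indicator of (0,1) and w is integrable near 0.  Picking one such
   point n_m for every m gives distinct points, since for i < j
   n_i is not in Psi^i(N), which contains Psi^(j-1)(N), which contains n_j. *)

Lemma range_iter_le (T : Type) (Psi : T -> T) m p : (m <= p)%N ->
  range (iter p Psi) `<=` range (iter m Psi).
Proof.
move=> le_mp _ [k _ <-]; exists (iter (p - m) Psi k) => //.
by rewrite -iterD addnC subnK.
Qed.

Section CompositionKernels.
Variables (R : realType) (V : set (nat -> R[i])) (Psi : nat -> nat).

Let K m := ker_pow V (comp_op Psi) m.

Lemma iter_comp_op m (f : nat -> R[i]) :
  iter m (comp_op Psi) f = f \o iter m Psi.
Proof.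
elim: m => [//|m IH]; apply: funext => k /=.
by rewrite IH /comp_op /= -iterSr.
Qed.

Lemma ker_pow_comp_opE m f :
  K m f <-> V f /\ forall k, f (iter m Psi k) = 0.
Proof.
rewrite /K /ker_pow /= iter_comp_op; split => -[Vf f0]; split => //.
  by move=> k; have := congr1 (fun g => g k) f0.
exact: funext.
Qed.

Lemma ker_pow_comp_op_sub m : K m `<=` K m.+1.
Proof.
move=> f /ker_pow_comp_opE[Vf f0]; apply/ker_pow_comp_opE; split => // k.
by rewrite iterSr.
Qed.

Lemma ker_pow_comp_op_gap m : K m <> K m.+1 ->
  exists2 y, range (iter m Psi) y & ~ range (iter m.+1 Psi) y.
Proof.
move=> neqK; have /existsNP[f] : ~ K m.+1 `<=` K m.
  move=> sub; apply: neqK; apply/seteqP; split=> //.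
  exact: ker_pow_comp_op_sub.
move=> /not_implyP[/ker_pow_comp_opE[Vf fS0] /ker_pow_comp_opE].
move=> /not_andP[//|/existsNP[k fk]].
exists (iter m Psi k); first by exists k.
by move=> [j _ jk]; apply: fk; rewrite -jk.
Qed.

Hypothesis V_indic1 : forall n, V \1_[set n].

Lemma indic1_ker_pow_comp_op m n :
  ~ range (iter m Psi) n -> K m \1_[set n].
Proof.
move=> nS; apply/ker_pow_comp_opE; split => // k.
rewrite indicE in_set1; case: eqP => // kn; exfalso.
by apply: nS; exists k.
Qed.

Lemma ascent_infinite_comp_opP : ascent_infinite V (comp_op Psi) <->
  forall m, exists2 y, range (iter m Psi) y & ~ range (iter m.+1 Psi) y.
Proof.
split=> [ascK m|gap [m KE]].
  by apply: ker_pow_comp_op_gap => KE; apply: ascK; exists m.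
have [y [k _ <-] yS] := gap m.
have /ker_pow_comp_opE[_ /(_ k)] : K m \1_[set iter m Psi k].
  by rewrite /K KE; apply: indic1_ker_pow_comp_op.
by rewrite indicE in_set1 eqxx => /eqP; rewrite oner_eq0.
Qed.

End CompositionKernels.

Lemma range_iter_gapsP (T : Type) (Psi : T -> T) :
  (forall m, exists2 y, range (iter m Psi) y & ~ range (iter m.+1 Psi) y) <->
  exists n : nat -> T,
    (forall i j, (1 <= i)%N -> (1 <= j)%N -> n i = n j -> i = j) /\
    (forall m, (1 <= m)%N ->
       ~ range (iter m Psi) (n m) /\ range (iter m.-1 Psi) (n m)).
Proof.
split=> [gap|[n [_ n_gap]] m]; last first.
  by have [nS nR] := n_gap m.+1 isT; exists (n m.+1).
have /choice[g g_gap] : forall m,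
    exists y, range (iter m Psi) y /\ ~ range (iter m.+1 Psi) y.
  by move=> m; have [y] := gap m; exists y.
exists (fun m => g m.-1); split=> [|[//|m] _]; last by have [] := g_gap m.
have g_neq i j : (i < j)%N -> g i <> g j.
  move=> lt_ij gij; have [_ giS] := g_gap i; have [gjR _] := g_gap j.
  by apply: giS; rewrite gij; apply: range_iter_le gjR.
move=> [//|i] [//|j] _ _ /= gij.
by case: (ltngtP i j) => [/g_neq/(_ gij)|/g_neq/(_ (esym gij))|->].
Qed.

Section IndicatorInOrliczLorentz.
Variable R : realType.

Lemma cabs_indic1 (n k : nat) : cabs (\1_[set n] k : R[i]) = (k == n)%:R.
Proof.
rewrite indicE in_set1 /cabs /Normc.normc /=.
by case: (k == n); rewrite /= expr0n addr0 ?expr1n ?sqrtr1 ?sqrtr0.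
Qed.

Lemma distr_le_indic1 (n : nat) s t : 0 <= s -> 0 <= t ->
  distr_le (\1_[set n] : nat -> R[i]) s t <-> 1 <= s \/ 1 <= t.
Proof.
move=> s0 t0; split=> [distr|s1t1 l ul /allP lS].
  case: (lerP 1 s) => [|s1]; [by left | right].
  by have := distr [:: n]; rewrite /= cabs_indic1 eqxx s1; apply.
have l_n x : x \in l -> s < 1 /\ x = n.
  move=> /lS /=; rewrite cabs_indic1.
  by case: eqP => [-> //|_]; rewrite ltNge s0.
case: s1t1 => [s1|t1].
  by case: l l_n {ul lS} => [|x l /(_ x (mem_head _ _))[]]; rewrite ?ltNge ?s1.
apply: le_trans t1; rewrite lern1 -(size_nseq 1 n) uniq_leq_size // => x.
by move=> /l_n[_ ->]; rewrite mem_seq1.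
Qed.

Lemma rearr_indic1 (n : nat) t :
  0 < t -> rearr (\1_[set n] : nat -> R[i]) t = (t < 1)%R%:R%:E.
Proof.
move=> t_gt0; rewrite /rearr; apply: le_anti; apply/andP; split.
- case: ltP => t1 /=.
    apply: ereal_inf_lbound; exists 1 => //; split => //.
    by apply/distr_le_indic1; [|apply: ltW|left].
  apply/lee_addgt0Pr => e e_gt0; rewrite add0e; apply: ereal_inf_lbound.
  by exists e => //; split => //; apply/distr_le_indic1; [exact: ltW..|right].
- apply/ereal_infP => _ [s [s_gt0 distr] <-]; rewrite lee_fin.
  case: ltP => t1 /=; last exact: ltW.
  have [//|] := (distr_le_indic1 n _ _ (ltW s_gt0) (ltW t_gt0)).1 distr.
  by rewrite leNgt t1.
Qed.

Lemma ol_integrand_indic1 (phi w : R -> R) (n : nat) t :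
  phi 0 = 0 -> 0 < t ->
  ol_integrand phi w 1 \1_[set n] t =
  ((fun t => (phi 1)%:E * (w t)%:E)%E \_ `]0, 1[) t.
Proof.
move=> phi0 t_gt0; rewrite /ol_integrand rearr_indic1 // mul1r patchE.
case: ltP => t1 /=; first by rewrite mem_set //= in_itv /= t_gt0 t1.
by rewrite memNset ?phi0 ?mul0r //= in_itv /= => /andP[_]; rewrite ltNge t1.
Qed.

Lemma in_l_phi_w_indic1 (phi w : R -> R) (n : nat) :
  young_function phi -> weight_function w -> in_l_phi_w phi w \1_[set n].
Proof.
move=> [_ [_ [phi_eq0 _]]] [_ [_ [w_int _]]].
have phi0 : phi 0 = 0 by apply/phi_eq0.
exists 1; split => //.
under eq_integral => t /[!inE] t_gt0 do rewrite ol_integrand_indic1 //.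
rewrite -integral_mkcondr setIidr; last first.
  by move=> t /=; rewrite in_itv /= => /andP[].
apply/integrable_lty/integrableZl; [exact: measurable_itv..|].
have itv01_sub : `]0, 1[ `<=` [set t : R | 0 < t <= 1].
  by move=> t /=; rewrite in_itv /= => /andP[-> /ltW].
apply: (@integrableS _ _ _ lebesgue_measure _ _ _ _ _ itv01_sub (w_int _ ltr01)).
  by rewrite -set_itvoc; exact: measurable_itv.
exact: measurable_itv.
Qed.

End IndicatorInOrliczLorentz.

Theorem theorem3p10 (R : realType) (phi w : R -> R) (Psi : nat -> nat) :
  young_function phi -> delta2 phi -> weight_function w ->
  (forall f : nat -> R[i], in_l_phi_w phi w f ->
     in_l_phi_w phi w (comp_op Psi f)) ->
  (ascent_infinite (in_l_phi_w phi w) (comp_op Psi) <->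
   exists n : nat -> nat,
     (forall i j, (1 <= i)%N -> (1 <= j)%N -> n i = n j -> i = j) /\
     (forall m, (1 <= m)%N ->
        ~ range (iter m Psi) (n m) /\ range (iter m.-1 Psi) (n m))).
Proof.
move=> phi_young _ w_weight _.
rewrite -range_iter_gapsP; apply: ascent_infinite_comp_opP => n.
exact: in_l_phi_w_indic1.
Qed.
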